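(* Let $\ket\psi$ be an $n$-qubit stabilizer state, $S=\mathrm{Weyl}(\ket\psi)$, and $T\subseteq S$ a subspace of dimension $n-t$. Then there exists a Clifford circuit $C$ such that $C\ket\psi=\ket{0^n}$, $C(S)=0^n\times\mathbb F_2^n$, and $C(T)=0^{n+t}\times\mathbb F_2^{n-t}$.
   Context: For $x=(a,b)\in\mathbb F_2^{2n}$, $W_x = i^{a\cdot b}X^{a_1}Z^{b_1}\otimes\cdots\otimes X^{a_n}Z^{b_n}$ ($a\cdot b$ over the integers); $\mathrm{Weyl}(\ket\psi)=\{x:W_x\ket\psi=\pm\ket\psi\}$. A Clifford circuit $C$ acts on $\mathbb F_2^{2n}$ by: $C(x)=y$ where $y$ is the unique element with $CW_xC^\dagger=\pm W_y$; for a set $A$, $C(A)=\{C(x):x\in A\}$. Equalities of states such as $C\ket\psi=\ket{0^n}$ are up to global phase. *)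

(* amplitudes in algC (algebraic complex numbers), which
   contain all amplitudes of stabilizer states / Clifford gates. *)
From HB Require Import structures.
From mathcomp Require Import all_boot all_order all_algebra algC.
Set Implicit Arguments. Unset Strict Implicit. Unset Printing Implicit Defensive.
Import Order.TTheory GRing.Theory Num.Theory.
Local Open Scope ring_scope.

Definition Basis (n : nat) := 'rV['F_2]_n.
(* Pauli labels x = (a,b) in F_2^{2n}; a = lsubmx x, b = rsubmx x. *)
Definition PLabel (n : nat) := 'rV['F_2]_(n + n).

Definition State (n : nat) := Basis n -> algC.
Definition Op (n : nat) := Basis n -> Basis n -> algC.

Definition op_mul n (A B : Op n) : Op n :=
  fun w z => \sum_(v : Basis n) A w v * B v z.
Definition op_adj n (A : Op n) : Op n := fun w z => (A z w)^*.
Definition op_id n : Op n := fun w z => (w == z)%:R.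
Definition op_apply n (A : Op n) (psi : State n) : State n :=
  fun w => \sum_(z : Basis n) A w z * psi z.

Definition ket0 n : State n := fun z => (z == 0)%:R.

Definition bit (c : 'F_2) : 'I_2 := if c == 0 then ord0 else ord_max.
Definition bitn (c : 'F_2) : nat := (c != 0).

(* single-qubit matrices (basis order |0>, |1>) *)
Definition pX : 'M[algC]_2 := \matrix_(i, j) (i != j)%:R.
Definition pZ : 'M[algC]_2 := \matrix_(i, j) ((i == j)%:R * (-1) ^+ i).
Definition pH : 'M[algC]_2 := (sqrtC 2)^-1 *: \matrix_(i, j) ((-1) ^+ (i * j)).
Definition pS : 'M[algC]_2 := \matrix_(i, j) ((i == j)%:R * 'i ^+ i).

Definition tens n (M : 'I_n -> 'M[algC]_2) : Op n :=
  fun w z => \prod_(j < n) M j (bit (w ord0 j)) (bit (z ord0 j)).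

(* a . b computed over the integers *)
Definition dotN n (a b : 'rV['F_2]_n) : nat := \sum_(j < n) bitn (a ord0 j) * bitn (b ord0 j).

Definition Weyl_op n (x : PLabel n) : Op n :=
  let a := lsubmx x in let b := rsubmx x in
  fun w z => 'i ^+ (dotN a b) *
    tens (fun j => pX ^+ (bitn (a ord0 j)) *m pZ ^+ (bitn (b ord0 j))) w z.

Definition Weyl n (psi : State n) (x : PLabel n) : Prop :=
  (forall w, op_apply (Weyl_op x) psi w = psi w) \/
  (forall w, op_apply (Weyl_op x) psi w = - psi w).

Inductive gate (n : nat) : Type :=
| Hgate of 'I_n
| Sgate of 'I_n
| CNOT (j k : 'I_n) of j != k.

Definition single n (j : 'I_n) (M : 'M[algC]_2) : Op n :=
  tens (fun k => if k == j then M else 1%:M).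

Definition cnot_op n (j k : 'I_n) : Op n :=
  fun w z => (w == z + (z ord0 j) *: delta_mx ord0 k)%:R.

Definition gate_op n (g : gate n) : Op n :=
  match g with
  | Hgate j => single j pH
  | Sgate j => single j pS
  | CNOT j k _ => cnot_op j k
  end.

(* A Clifford circuit is a finite sequence of gates, applied left to right. *)
Definition circuit (n : nat) := seq (gate n).
Definition circ_op n (c : circuit n) : Op n :=
  foldl (fun A g => op_mul (gate_op g) A) (@op_id n) c.

Definition stabilizer_state n (psi : State n) : Prop :=
  exists (U : circuit n) (c : algC), `|c| = 1 /\
    forall z, psi z = c * op_apply (circ_op U) (@ket0 n) z.

(* C W_x C^dagger = +- W_y, i.e. C(x) = y *)
Definition cliff_maps n (C : circuit n) (x y : PLabel n) : Prop :=
  exists s : algC, (s = 1 \/ s = -1) /\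
    forall w z, op_mul (op_mul (circ_op C) (Weyl_op x)) (op_adj (circ_op C)) w z
                = s * Weyl_op y w z.

Definition cliff_image n (C : circuit n) (A : PLabel n -> Prop) (y : PLabel n) : Prop :=
  exists x, A x /\ cliff_maps C x y.

From HB Require Import structures.
From mathcomp Require Import all_boot all_order all_algebra algC.
From mathcomp Require Import ring.
From Stdlib Require Import FunctionalExtensionality.
Import Order.TTheory GRing.Theory Num.Theory.
Set Implicit Arguments. Unset Strict Implicit. Unset Printing Implicit Defensive.
Local Open Scope ring_scope.

(* Write [psi = c U|0^n>] and let [V] be the inverse circuit of [U], so that [V psi = c|0^n>].
   Conjugation by a Clifford circuit acts on Pauli labels by an injective linear map (every
   gate acts by an involution of F_2^{2n}), and [W_x psi = +-psi] iff [W_{C(x)} (C psi) =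
   +-C psi].  Since [Weyl(|0^n>)] is the space [0^n x F_2^n] of Z-type labels, [V] maps
   [Weyl(psi)] onto it and [T] to an (n-t)-dimensional space of Z-type labels.  CNOT gates fix
   [|0^n>] and act on Z-type labels by adding [b_k] to [b_j]; Gaussian elimination with these
   operations, adding one basis vector at a time and pivoting on the highest qubit not yet
   used, moves [V(T)] onto the labels [0^{n+t} x F_2^{n-t}] supported on the last [n-t]
   qubits. *)

Lemma F2P (c : 'F_2) : c = 0 \/ c = 1.
Proof. by case: c => [[|[|m]] lt_m2]; [left | right | ]; try apply/val_inj. Qed.

Lemma F2_addxx (c : 'F_2) : c + c = 0.
Proof. by case: (F2P c) => ->; apply/val_inj. Qed.

Lemma F2_addKv (V : lmodType 'F_2) (u v : V) : u + v + u = v.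
Proof. by rewrite addrC addrA -[u]scale1r -scalerDl F2_addxx scale0r add0r. Qed.

Lemma addv_line_F2 (V : vectType 'F_2) (U : {vspace V}) (v e : V) :
  v + e \in U -> (U + <[v]> = U + <[e]>)%VS.
Proof.
have sub_line a b : a + b \in U -> (U + <[a]> <= U + <[b]>)%VS.
  move=> ab_U; rewrite subv_add addvSl -memvE -[a](F2_addKv b) [b + a]addrC.
  by rewrite memv_add ?memv_line.
by move=> ve_U; apply/eqP; rewrite eqEsubv !sub_line // addrC.
Qed.

Lemma sumF2 (R : nmodType) (F : 'F_2 -> R) : \sum_(c : 'F_2) F c = F 0 + F 1.
Proof.
rewrite (bigD1 0) //= (bigD1 1) //= big1 ?addr0 // => c /andP[c_neq1 c_neq0].
by case: (F2P c) c_neq1 c_neq0 => ->; rewrite eqxx.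
Qed.

Lemma sum_ord2 (R : nmodType) (F : 'I_2 -> R) : \sum_(k < 2) F k = F ord0 + F ord_max.
Proof. by rewrite !big_ord_recl big_ord0 addr0; congr (_ + F _); apply/val_inj. Qed.

Lemma ord2P (i : 'I_2) : i = ord0 \/ i = ord_max.
Proof. by case: i => [[|[|m]] lt_m2]; [left | right | ]; try apply/val_inj. Qed.

Lemma bit_inj : injective bit.
Proof. by move=> c d; case: (F2P c) => ->; case: (F2P d) => ->. Qed.

Lemma bitnK (c : 'F_2) : (bitn c)%:R = c.
Proof. by case: (F2P c) => ->. Qed.

Lemma natr_F2 m : (m%:R : 'F_2) = (odd m)%:R.
Proof. by rewrite -(Fp_nat_mod (isT : prime 2)) modn2. Qed.

Lemma odd_F2 m m' : (m%:R : 'F_2) = m'%:R <-> odd m = odd m'.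
Proof.
rewrite (natr_F2 m) (natr_F2 m'); split=> [|-> //].
by case: (odd m) (odd m') => [] [] // /eqP; rewrite ?oner_eq0 // eq_sym oner_eq0.
Qed.

Lemma signr_F2 m m' : ((-1) ^+ m : algC) = (-1) ^+ m' <-> (m%:R : 'F_2) = m'%:R.
Proof.
rewrite odd_F2 -signr_odd -(signr_odd _ m').
by split=> [/signr_inj | ->].
Qed.

Lemma expCi_half m : ('i : algC) ^+ m = (-1) ^+ m./2 * 'i ^+ odd m.
Proof.
by rewrite -{1}(odd_double_half m) exprD -muln2 mulnC exprM sqrCi mulrC.
Qed.

Lemma expCi_F2 m m' : (m%:R : 'F_2) = m'%:R ->
  exists b : bool, ('i ^+ m : algC) = (-1) ^+ b * 'i ^+ m'.
Proof.
move/odd_F2=> odd_mm'; exists (odd (m./2 + m'./2)).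
rewrite signr_odd (expCi_half m) (expCi_half m') odd_mm' mulrA -exprD.
congr (_ * _); rewrite -addnA exprD -[(-1) ^+ (m'./2 + _)]signr_odd.
by rewrite oddD addbb mulr1.
Qed.

Lemma expCi_neq0 m : ('i : algC) ^+ m != 0.
Proof. by rewrite expf_neq0 // neq0Ci. Qed.

(** * Operators on n qubits *)

Section Operators.
Variable n : nat.
Implicit Types (A B G : Op n) (psi : State n) (s : algC).

Lemma op_ext A B : (forall w z, A w z = B w z) -> A = B.
Proof.
by move=> eqAB; apply: functional_extensionality => w; apply: functional_extensionality.
Qed.

Lemma state_ext psi psi' : (forall w, psi w = psi' w) -> psi = psi'.
Proof. exact: functional_extensionality. Qed.

Lemma sum_delta (a : Basis n) (F : Basis n -> algC) : \sum_v (a == v)%:R * F v = F a.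
Proof.
rewrite (bigD1 a) //= eqxx mul1r big1 ?addr0 // => v /negbTE.
by rewrite eq_sym => ->; rewrite mul0r.
Qed.

Lemma sum_delta_r (a : Basis n) (F : Basis n -> algC) : \sum_v F v * (v == a)%:R = F a.
Proof. by rewrite -[RHS](sum_delta a); apply: eq_bigr => v _; rewrite mulrC eq_sym. Qed.

Lemma op_mulA A B G : op_mul (op_mul A B) G = op_mul A (op_mul B G).
Proof.
apply: op_ext => w z; rewrite /op_mul; under eq_bigr do rewrite mulr_suml.
rewrite exchange_big; apply: eq_bigr => u _; rewrite mulr_sumr.
by apply: eq_bigr => v _; rewrite mulrA.
Qed.

Lemma op_mul1l A : op_mul (@op_id n) A = A.
Proof. by apply: op_ext => w z; rewrite /op_mul /op_id sum_delta. Qed.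

Lemma op_mul1r A : op_mul A (@op_id n) = A.
Proof. by apply: op_ext => w z; rewrite /op_mul /op_id sum_delta_r. Qed.

Lemma op_adj_mul A B : op_adj (op_mul A B) = op_mul (op_adj B) (op_adj A).
Proof.
apply: op_ext => w z; rewrite /op_adj /op_mul rmorph_sum.
by apply: eq_bigr => v _; rewrite rmorphM mulrC.
Qed.

Lemma op_adj1 : op_adj (@op_id n) = @op_id n.
Proof. by apply: op_ext => w z; rewrite /op_adj /op_id conjC_nat eq_sym. Qed.

Definition op_scale s A : Op n := fun w z => s * A w z.

Lemma op_scale1 A : op_scale 1 A = A.
Proof. by apply: op_ext => w z; rewrite /op_scale mul1r. Qed.

Lemma op_scaleA s s' A : op_scale s (op_scale s' A) = op_scale (s * s') A.
Proof. by apply: op_ext => w z; rewrite /op_scale mulrA. Qed.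

Lemma op_mul_scalel s A B : op_mul (op_scale s A) B = op_scale s (op_mul A B).
Proof.
by apply: op_ext => w z; rewrite /op_mul /op_scale mulr_sumr; apply: eq_bigr => v _; rewrite mulrA.
Qed.

Lemma op_mul_scaler s A B : op_mul A (op_scale s B) = op_scale s (op_mul A B).
Proof.
by apply: op_ext => w z; rewrite /op_mul /op_scale mulr_sumr; apply: eq_bigr => v _; rewrite mulrCA.
Qed.

Lemma op_apply_mul A B psi : op_apply (op_mul A B) psi = op_apply A (op_apply B psi).
Proof.
apply: state_ext => w; rewrite /op_apply /op_mul; under eq_bigr do rewrite mulr_suml.
rewrite exchange_big; apply: eq_bigr => u _; rewrite mulr_sumr.
by apply: eq_bigr => v _; rewrite mulrA.
Qed.

Lemma op_apply1 psi : op_apply (@op_id n) psi = psi.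
Proof. by apply: state_ext => w; rewrite /op_apply /op_id sum_delta. Qed.

Lemma op_apply_scale s A psi : op_apply (op_scale s A) psi = (fun w => s * op_apply A psi w).
Proof.
by apply: state_ext => w; rewrite /op_apply mulr_sumr; apply: eq_bigr => v _; rewrite mulrA.
Qed.

Lemma op_applyZ s A psi : op_apply A (fun w => s * psi w) = (fun w => s * op_apply A psi w).
Proof.
by apply: state_ext => w; rewrite /op_apply mulr_sumr; apply: eq_bigr => v _; rewrite mulrCA.
Qed.

Lemma op_apply_ket0 A w : op_apply A (@ket0 n) w = A w 0.
Proof. by rewrite /op_apply /ket0 sum_delta_r. Qed.

Definition op_conj G A : Op n := op_mul (op_mul G A) (op_adj G).

Lemma op_conj1 A : op_conj (@op_id n) A = A.
Proof. by rewrite /op_conj op_adj1 op_mul1l op_mul1r. Qed.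

Lemma op_conjM G G' A : op_conj (op_mul G G') A = op_conj G (op_conj G' A).
Proof. by rewrite /op_conj op_adj_mul !op_mulA. Qed.

Lemma op_conj_scale s G A : op_conj G (op_scale s A) = op_scale s (op_conj G A).
Proof. by rewrite /op_conj op_mul_scaler op_mul_scalel. Qed.

Definition perm_op (pi : Basis n -> Basis n) : Op n := fun w z => (w == pi z)%:R.

Lemma inv_eq_swap pi : involutive pi -> forall u v : Basis n, (u == pi v) = (pi u == v).
Proof. by move=> piK u v; apply/eqP/eqP => [-> | <-]; rewrite piK. Qed.

Lemma perm_op_adj pi : involutive pi -> op_adj (perm_op pi) = perm_op pi.
Proof.
move=> piK; apply: op_ext => w z; rewrite /op_adj /perm_op conjC_nat.
by rewrite inv_eq_swap // eq_sym.
Qed.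

Lemma perm_op_unitary pi : involutive pi ->
  op_mul (op_adj (perm_op pi)) (perm_op pi) = @op_id n.
Proof.
move=> piK; rewrite perm_op_adj //; apply: op_ext => w z; rewrite /op_mul /perm_op /op_id.
under eq_bigr => v _ do rewrite [w == _]inv_eq_swap //.
by rewrite sum_delta (inv_eq_swap piK) piK.
Qed.

Lemma op_conj_perm pi A : involutive pi -> op_conj (perm_op pi) A = fun w z => A (pi w) (pi z).
Proof.
move=> piK; rewrite /op_conj perm_op_adj //; apply: op_ext => w z; rewrite /op_mul /perm_op.
rewrite sum_delta_r; under eq_bigr => u _ do rewrite inv_eq_swap //.
by rewrite sum_delta.
Qed.

End Operators.

(** * Tensor products and single-qubit matrices *)

Lemma prodr_natb (R : comPzSemiRingType) (I : finType) (P : pred I) :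
  \prod_(i : I) ((P i)%:R : R) = [forall i, P i]%:R.
Proof.
case: (boolP [forall i, P i]) => [/forallP allP | /forallPn[i /negbTE Pi]].
  by rewrite big1 // => i _; rewrite allP.
by rewrite (bigD1 i) //= Pi mul0r.
Qed.

Lemma row_eqE (R : eqType) n (u v : 'rV[R]_n) : (u == v) = [forall j, u ord0 j == v ord0 j].
Proof.
apply/eqP/forallP => [-> // | eq_uv]; apply/rowP => j; exact/eqP.
Qed.

Definition adjmx m n (M : 'M[algC]_(m, n)) : 'M[algC]_(n, m) := \matrix_(i, j) (M j i)^*.

Lemma adjmx1 n : adjmx (1%:M : 'M[algC]_n) = 1%:M.
Proof. by apply/matrixP => i j; rewrite !mxE rmorph_nat eq_sym. Qed.

Lemma adjmxZ m n (s : algC) (M : 'M[algC]_(m, n)) : adjmx (s *: M) = s^* *: adjmx M.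
Proof. by apply/matrixP => i j; rewrite !mxE rmorphM. Qed.

Section Tensor.
Variable n : nat.
Implicit Types M N : 'I_n -> 'M[algC]_2.

Lemma sum_row_prod (F : 'I_n -> 'F_2 -> algC) :
  \sum_(v : Basis n) \prod_j F j (v ord0 j) = \prod_j \sum_(c : 'F_2) F j c.
Proof.
rewrite bigA_distr_bigA /= (reindex (fun v : Basis n => [ffun j => v ord0 j])) /=.
  by apply: eq_bigr => v _; apply: eq_bigr => j _; rewrite ffunE.
exists (fun f : {ffun 'I_n -> 'F_2} => \row_j f j : Basis n) => [v _ | f _].
  by apply/rowP => j; rewrite mxE ffunE.
by apply/ffunP => j; rewrite ffunE mxE.
Qed.

Lemma tens_mul M N : op_mul (tens M) (tens N) = tens (fun j => M j *m N j).
Proof.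
apply: op_ext => w z; rewrite /op_mul /tens; under eq_bigr do rewrite -big_split /=.
rewrite (sum_row_prod (fun j c => M j (bit (w ord0 j)) (bit c) * N j (bit c) (bit (z ord0 j)))).
by apply: eq_bigr => j _; rewrite sumF2 mxE sum_ord2.
Qed.

Lemma tens_adj M : op_adj (tens M) = tens (fun j => adjmx (M j)).
Proof.
by apply: op_ext => w z; rewrite /op_adj /tens rmorph_prod; apply: eq_bigr => j _; rewrite mxE.
Qed.

Lemma tens1 : tens (fun _ => 1%:M) = @op_id n.
Proof.
apply: op_ext => w z; rewrite /tens /op_id.
under eq_bigr do rewrite mxE (inj_eq bit_inj).
by rewrite prodr_natb row_eqE.
Qed.

Lemma tens_scale (j : 'I_n) s M :
  tens (fun k => if k == j then s *: M k else M k) = op_scale s (tens M).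
Proof.
apply: op_ext => w z; rewrite /tens /op_scale (bigD1 j) //= eqxx mxE.
rewrite [in RHS](bigD1 j) //= -mulrA; congr (_ * (_ * _)).
by apply: eq_bigr => k /negbTE ->.
Qed.

Lemma single_adj (j : 'I_n) E : op_adj (single j E) = single j (adjmx E).
Proof.
rewrite /single tens_adj; congr tens; apply: functional_extensionality => k.
by case: (k == j); rewrite ?adjmx1.
Qed.

Lemma single_unitary (j : 'I_n) E : adjmx E *m E = 1 ->
  op_mul (op_adj (single j E)) (single j E) = @op_id n.
Proof.
move=> unitE; rewrite single_adj /single tens_mul -tens1; congr tens.
by apply: functional_extensionality => k; case: (k == j); rewrite ?mulmx1.
Qed.

Lemma op_conj_single (j : 'I_n) E M :
  op_conj (single j E) (tens M) = tens (fun k => if k == j then E *m M k *m adjmx E else M k).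
Proof.
rewrite /op_conj /single tens_mul tens_adj tens_mul; congr tens.
apply: functional_extensionality => k; case: (k == j) => //.
by rewrite adjmx1 mul1mx mulmx1.
Qed.

End Tensor.

Definition m22 (a b c d : algC) : 'M[algC]_2 :=
  \matrix_(i, j) if i == ord0 then (if j == ord0 then a else b) else (if j == ord0 then c else d).

Ltac m22_ext := apply/matrixP; let i := fresh "i" in let j := fresh "j" in
  move=> i j; case: (ord2P i) => ->; case: (ord2P j) => ->; rewrite !mxE.

Lemma mul_m22 a b c d a' b' c' d' :
  m22 a b c d *m m22 a' b' c' d' =
  m22 (a * a' + b * c') (a * b' + b * d') (c * a' + d * c') (c * b' + d * d').
Proof. by m22_ext; rewrite sum_ord2 !mxE. Qed.

Lemma adjmx_m22 a b c d : adjmx (m22 a b c d) = m22 a^* c^* b^* d^*.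
Proof. by m22_ext. Qed.

Lemma scale_m22 s a b c d : s *: m22 a b c d = m22 (s * a) (s * b) (s * c) (s * d).
Proof. by m22_ext. Qed.

Lemma m22_1 : (1 : 'M[algC]_2) = m22 1 0 0 1.
Proof. by m22_ext. Qed.

Lemma pX_m22 : pX = m22 0 1 1 0.
Proof. by m22_ext. Qed.

Lemma pZ_m22 : pZ = m22 1 0 0 (-1).
Proof. by m22_ext; rewrite /= ?mul1r ?mul0r ?expr1 ?expr0. Qed.

Lemma pS_m22 : pS = m22 1 0 0 'i.
Proof. by m22_ext; rewrite /= ?mul1r ?mul0r ?expr1 ?expr0. Qed.

Definition invsqrt2 : algC := (sqrtC 2)^-1.

Lemma pH_m22 : pH = invsqrt2 *: m22 1 1 1 (-1).
Proof. by rewrite /pH; congr (_ *: _); m22_ext; rewrite /= ?expr1 ?expr0. Qed.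

Lemma invsqrt2_real : invsqrt2^* = invsqrt2.
Proof. by rewrite /invsqrt2 fmorphV; congr (_^-1); apply: geC0_conj; rewrite sqrtC_ge0 ler0n. Qed.

Lemma invsqrt2_sqr : invsqrt2 * invsqrt2 = 2^-1.
Proof. by rewrite /invsqrt2 -invfM -expr2 sqrtCK. Qed.

Ltac simp_m22 := rewrite ?(mul0r, mulr0, mul1r, mulr1, add0r, addr0, mulrN, mulNr, opprK,
  rmorph0, rmorph1, rmorphN1, rmorphN, conjCi, expr0, expr1, scale1r).

Lemma adjmx_pH : adjmx pH = pH.
Proof. by rewrite pH_m22 adjmxZ invsqrt2_real adjmx_m22; simp_m22. Qed.

Lemma pH_unitary : adjmx pH *m pH = 1.
Proof.
rewrite adjmx_pH pH_m22 -scalemxAl -scalemxAr scalerA invsqrt2_sqr mul_m22 m22_1 scale_m22.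
have two_neq0 : (2 : algC) != 0 by rewrite pnatr_eq0.
by congr m22; simp_m22; rewrite ?subrr ?mulr0 // ?opprK -[1 + 1]/(2%:R) mulVf.
Qed.

Lemma pS_unitary : adjmx pS *m pS = 1.
Proof. by rewrite pS_m22 adjmx_m22 mul_m22 m22_1; simp_m22; rewrite -expr2 sqrCi opprK. Qed.

Lemma pS_cube : pS *m (pS *m pS) = adjmx pS.
Proof. by rewrite pS_m22 adjmx_m22 !mul_m22; simp_m22; rewrite mulrA -expr2 sqrCi mulN1r. Qed.

Definition pauli (a b : 'F_2) : 'M[algC]_2 :=
  'i ^+ (bitn a * bitn b) *: (pX ^+ bitn a *m pZ ^+ bitn b).

Lemma pauli00 : pauli 0 0 = m22 1 0 0 1.
Proof. by rewrite /pauli /= !expr0 scale1r m22_1 mul_m22; simp_m22. Qed.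

Lemma pauli10 : pauli 1 0 = m22 0 1 1 0.
Proof. by rewrite /pauli /= !expr0 expr1 scale1r m22_1 pX_m22 mul_m22; simp_m22. Qed.

Lemma pauli01 : pauli 0 1 = m22 1 0 0 (-1).
Proof. by rewrite /pauli /= !expr0 expr1 scale1r m22_1 pZ_m22 mul_m22; simp_m22. Qed.

Lemma pauli11 : pauli 1 1 = m22 0 (- 'i) 'i 0.
Proof. by rewrite /pauli /= !expr1 pX_m22 pZ_m22 mul_m22 scale_m22; simp_m22. Qed.

Lemma pH_conj_pauli (a b : 'F_2) :
  exists s : bool, pH *m pauli a b *m adjmx pH = (-1) ^+ s *: pauli b a.
Proof.
rewrite adjmx_pH pH_m22 -!scalemxAl -scalemxAr scalerA invsqrt2_sqr.
suff [s Hs] : exists s : bool,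
    m22 1 1 1 (-1) *m pauli a b *m m22 1 1 1 (-1) = (2 * (-1) ^+ s) *: pauli b a.
  by exists s; rewrite Hs scalerA mulrA mulVf ?mul1r // pnatr_eq0.
case: (F2P a) => ->; case: (F2P b) => ->;
  [exists false | exists false | exists false | exists true];
by rewrite ?pauli00 ?pauli01 ?pauli10 ?pauli11 !mul_m22 scale_m22; simp_m22; congr m22; ring.
Qed.

Lemma pS_conj_pauli (a b : 'F_2) :
  exists s : bool, pS *m pauli a b *m adjmx pS = (-1) ^+ s *: pauli a (b + a).
Proof.
rewrite pS_m22 adjmx_m22.
case: (F2P a) => ->; case: (F2P b) => ->;
  [exists false | exists false | exists false | exists true];
rewrite ?addr0 ?add0r ?F2_addxx ?pauli00 ?pauli01 ?pauli10 ?pauli11 !mul_m22 scale_m22; simp_m22;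
congr m22; rewrite ?mulrA -?expr2 ?sqrCi; ring.
Qed.

(** * Weyl operators and the action of Clifford gates on labels *)

Local Notation xa x := (lsubmx x ord0).
Local Notation xb x := (rsubmx x ord0).

Lemma PLabel_ext n (x y : PLabel n) :
  (forall i, xa x i = xa y i) -> (forall i, xb x i = xb y i) -> x = y.
Proof. by move=> eq_a eq_b; rewrite -[x]hsubmxK -[y]hsubmxK; congr row_mx; apply/rowP. Qed.

Section LabelEntries.
Variables (n : nat) (c : 'F_2) (x y : PLabel n) (i : 'I_n).

Lemma xaD : xa (x + y) i = xa x i + xa y i. Proof. by rewrite !mxE. Qed.
Lemma xbD : xb (x + y) i = xb x i + xb y i. Proof. by rewrite !mxE. Qed.
Lemma xaZ : xa (c *: x) i = c * xa x i. Proof. by rewrite !mxE. Qed.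
Lemma xbZ : xb (c *: x) i = c * xb x i. Proof. by rewrite !mxE. Qed.

End LabelEntries.

Lemma XZ_entry (a b u v : 'F_2) :
  (pX ^+ bitn a *m pZ ^+ bitn b) (bit u) (bit v) = (-1) ^+ (bitn b * bitn v) * (u == v + a)%:R.
Proof.
case: (F2P a) => ->; case: (F2P b) => ->; rewrite /= ?expr0 ?expr1 ?m22_1 ?pX_m22 ?pZ_m22 mul_m22;
by case: (F2P u) => ->; case: (F2P v) => ->; rewrite !mxE /=; simp_m22.
Qed.

Lemma Weyl_op_tens n (x : PLabel n) : Weyl_op x = tens (fun j => pauli (xa x j) (xb x j)).
Proof.
apply: op_ext => w z; rewrite /Weyl_op /tens /dotN expr_sum -big_split /=.
by apply: eq_bigr => j _; rewrite [in RHS]mxE.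
Qed.

Lemma Weyl_op_entry n (x : PLabel n) w z :
  Weyl_op x w z = 'i ^+ dotN (lsubmx x) (rsubmx x) *
                  ((-1) ^+ dotN (rsubmx x) z * (w == z + lsubmx x)%:R).
Proof.
rewrite /Weyl_op /tens; congr (_ * _); under eq_bigr do rewrite XZ_entry.
rewrite big_split /= prodrXr prodr_natb; congr (_ * _%:R).
by rewrite row_eqE; congr (nat_of_bool _); apply: eq_forallb => j; rewrite !mxE.
Qed.

Lemma dotN0r n (u : 'rV['F_2]_n) : dotN u 0 = 0%N.
Proof. by rewrite /dotN big1 // => j _; rewrite mxE muln0. Qed.

Lemma dotN0l n (u : 'rV['F_2]_n) : dotN 0 u = 0%N.
Proof. by rewrite /dotN big1 // => j _; rewrite mxE. Qed.

Section DotProduct.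
Variables (R : comNzRingType) (n : nat).
Implicit Types u v w : 'rV[R]_n.

Definition dotF u v : R := (u *m v^T) ord0 ord0.

Lemma dotFDl u v w : dotF (u + v) w = dotF u w + dotF v w.
Proof. by rewrite /dotF mulmxDl mxE. Qed.

Lemma dotFDr u v w : dotF u (v + w) = dotF u v + dotF u w.
Proof. by rewrite /dotF linearD mulmxDr mxE. Qed.

Lemma dotFZl c u v : dotF (c *: u) v = c * dotF u v.
Proof. by rewrite /dotF -scalemxAl mxE. Qed.

Lemma dotFZr c u v : dotF u (c *: v) = c * dotF u v.
Proof. by rewrite /dotF linearZ /= -scalemxAr mxE. Qed.

Lemma dotF_deltar u (k : 'I_n) : dotF u (delta_mx ord0 k) = u ord0 k.
Proof. by rewrite /dotF trmx_delta -colE mxE. Qed.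

Lemma dotF_deltal u (k : 'I_n) : dotF (delta_mx ord0 k) u = u ord0 k.
Proof. by rewrite /dotF -rowE !mxE. Qed.

End DotProduct.

Lemma dotN_F2 n (u v : 'rV['F_2]_n) : (dotN u v)%:R = dotF u v.
Proof. by rewrite /dotN /dotF natr_sum mxE; apply: eq_bigr => j _; rewrite natrM !bitnK mxE. Qed.

Definition cnot_perm n (j k : 'I_n) (z : 'rV['F_2]_n) : 'rV['F_2]_n :=
  z + z ord0 j *: delta_mx ord0 k.

Lemma cnot_permD n (j k : 'I_n) : {morph cnot_perm j k : u v / u + v}.
Proof. by move=> u v; rewrite /cnot_perm mxE scalerDl addrACA. Qed.

Lemma cnot_permK n (j k : 'I_n) : j != k -> involutive (cnot_perm j k).
Proof.
move=> neq_jk z; rewrite {1}/cnot_perm !mxE eqxx (negbTE neq_jk) mulr0 addr0.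
by rewrite /cnot_perm -addrA -scalerDl F2_addxx scale0r addr0.
Qed.

Lemma dotF_cnot_perm n (j k : 'I_n) (a b : 'rV['F_2]_n) : j != k ->
  dotF (cnot_perm j k a) (cnot_perm k j b) = dotF a b.
Proof.
move=> neq_jk; rewrite /cnot_perm dotFDl !dotFDr !dotFZl !dotFZr !dotF_deltal !dotF_deltar.
rewrite mxE eq_sym (negbTE neq_jk) andbF !mulr0 addr0 [a ord0 j * _]mulrC.
by rewrite -addrA F2_addxx addr0.
Qed.

Lemma dotF_cnot_permC n (j k : 'I_n) (b z : 'rV['F_2]_n) :
  dotF b (cnot_perm j k z) = dotF (cnot_perm k j b) z.
Proof. by rewrite /cnot_perm dotFDl dotFDr dotFZl dotFZr dotF_deltal dotF_deltar mulrC. Qed.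

Definition gate_map n (g : gate n) (x : PLabel n) : PLabel n :=
  match g with
  | Hgate j => row_mx (\row_i if i == j then xb x j else xa x i)
                      (\row_i if i == j then xa x j else xb x i)
  | Sgate j => row_mx (lsubmx x) (\row_i if i == j then xb x j + xa x j else xb x i)
  | CNOT j k _ => row_mx (cnot_perm j k (lsubmx x)) (cnot_perm k j (rsubmx x))
  end.

Section GateMapEntries.
Variables (n : nat) (j : 'I_n) (x : PLabel n) (k : 'I_n).

Lemma gate_mapH_a : xa (gate_map (Hgate j) x) k = if k == j then xb x j else xa x k.
Proof. by rewrite row_mxKl mxE. Qed.

Lemma gate_mapH_b : xb (gate_map (Hgate j) x) k = if k == j then xa x j else xb x k.
Proof. by rewrite row_mxKr mxE. Qed.

Lemma gate_mapS_a : xa (gate_map (Sgate j) x) k = xa x k.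
Proof. by rewrite row_mxKl. Qed.

Lemma gate_mapS_b : xb (gate_map (Sgate j) x) k = if k == j then xb x j + xa x j else xb x k.
Proof. by rewrite row_mxKr mxE. Qed.

End GateMapEntries.

Lemma cnot_conj_Weyl n (j k : 'I_n) (neq_jk : j != k) (x : PLabel n) : exists s : bool,
  op_conj (gate_op (CNOT neq_jk)) (Weyl_op x) =
  op_scale ((-1) ^+ s) (Weyl_op (gate_map (CNOT neq_jk) x)).
Proof.
have permK := cnot_permK neq_jk.
have [s phase] : exists s : bool, ('i ^+ dotN (lsubmx x) (rsubmx x) : algC) =
    (-1) ^+ s * 'i ^+ dotN (cnot_perm j k (lsubmx x)) (cnot_perm k j (rsubmx x)).
  by apply: expCi_F2; rewrite !dotN_F2 dotF_cnot_perm.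
exists s; rewrite [gate_op _]/(perm_op (cnot_perm j k)) op_conj_perm //.
apply: op_ext => w z; rewrite /op_scale !Weyl_op_entry /= row_mxKl row_mxKr phase -mulrA.
congr (_ * (_ * (_ * _))); first by apply/signr_F2; rewrite !dotN_F2 dotF_cnot_permC.
by rewrite -[in RHS](inj_eq (can_inj permK)) cnot_permD permK.
Qed.

Lemma gate_conj_Weyl n (g : gate n) (x : PLabel n) :
  exists s : bool, op_conj (gate_op g) (Weyl_op x) = op_scale ((-1) ^+ s) (Weyl_op (gate_map g x)).
Proof.
case: g => [j | j | j k neq_jk].
- have [s conj_j] := pH_conj_pauli (xa x j) (xb x j).
  exists s; rewrite !Weyl_op_tens op_conj_single -(tens_scale j); congr tens.
  by apply: functional_extensionality => k; rewrite gate_mapH_a gate_mapH_b; case: eqP => [-> |].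
- have [s conj_j] := pS_conj_pauli (xa x j) (xb x j).
  exists s; rewrite !Weyl_op_tens op_conj_single -(tens_scale j); congr tens.
  by apply: functional_extensionality => k; rewrite gate_mapS_a gate_mapS_b; case: eqP => [-> |].
exact: cnot_conj_Weyl.
Qed.

Lemma gate_unitary n (g : gate n) : op_mul (op_adj (gate_op g)) (gate_op g) = @op_id n.
Proof.
case: g => [j | j | j k neq_jk].
- exact: single_unitary pH_unitary.
- exact: single_unitary pS_unitary.
- exact: (perm_op_unitary (cnot_permK neq_jk)).
Qed.

Section Circuits.
Variable n : nat.
Implicit Types (C : circuit n) (g : gate n) (x : PLabel n).

Lemma circ_op_rcons C g : circ_op (rcons C g) = op_mul (gate_op g) (circ_op C).
Proof. by rewrite /circ_op foldl_rcons. Qed.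

Lemma circ_op_cat C C' : circ_op (C ++ C') = op_mul (circ_op C') (circ_op C).
Proof.
elim/last_ind: C' => [|C' g IH]; first by rewrite cats0 /circ_op /= op_mul1l.
by rewrite -rcons_cat !circ_op_rcons IH op_mulA.
Qed.

Lemma circ_unitary C : op_mul (op_adj (circ_op C)) (circ_op C) = @op_id n.
Proof.
elim/last_ind: C => [|C g IH]; first by rewrite /circ_op /= op_adj1 op_mul1l.
rewrite circ_op_rcons op_adj_mul op_mulA -(op_mulA (op_adj (gate_op g))) gate_unitary.
by rewrite op_mul1l IH.
Qed.

(* [S^-1 = S^3] is the only gate that is not self-inverse. *)
Definition gate_inv g : circuit n := if g is Sgate j then [:: g; g; g] else [:: g].

Definition circ_inv C : circuit n := flatten (rev (map gate_inv C)).

Lemma circ_op_gate_inv g : circ_op (gate_inv g) = op_adj (gate_op g).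
Proof.
case: g => [j | j | j k neq_jk]; rewrite /circ_op /= ?op_mul1r.
- by rewrite single_adj adjmx_pH.
- rewrite single_adj /single !tens_mul -pS_cube; congr tens.
  by apply: functional_extensionality => k; case: (k == j); rewrite ?mulmx1.
- by rewrite [cnot_op j k]/(perm_op (cnot_perm j k)) perm_op_adj //; apply: cnot_permK.
Qed.

Lemma circ_op_inv C : circ_op (circ_inv C) = op_adj (circ_op C).
Proof.
elim/last_ind: C => [|C g IH]; first by rewrite /circ_inv /circ_op /= op_adj1.
rewrite /circ_inv map_rcons rev_rcons /= circ_op_cat -/(circ_inv C) IH circ_op_gate_inv.
by rewrite circ_op_rcons op_adj_mul.
Qed.

Definition circ_map C x : PLabel n := foldl (fun y g => gate_map g y) x C.

Lemma circ_map_rcons C g x : circ_map (rcons C g) x = gate_map g (circ_map C x).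
Proof. by rewrite /circ_map foldl_rcons. Qed.

Lemma circ_map_cat C C' x : circ_map (C ++ C') x = circ_map C' (circ_map C x).
Proof. by rewrite /circ_map foldl_cat. Qed.

Lemma circ_conj_Weyl C x : exists s : bool,
  op_conj (circ_op C) (Weyl_op x) = op_scale ((-1) ^+ s) (Weyl_op (circ_map C x)).
Proof.
elim/last_ind: C => [|C g [s conjC]].
  by exists false; rewrite /circ_op /= op_conj1 op_scale1.
have [s' conj_g] := gate_conj_Weyl g (circ_map C x).
exists (s (+) s'); rewrite circ_op_rcons op_conjM conjC op_conj_scale conj_g op_scaleA.
by rewrite signr_addb circ_map_rcons.
Qed.

Lemma gate_mapK g : involutive (gate_map g).
Proof.
move=> x; case: g => [j | j | j k neq_jk]; last first.
  by rewrite /= !row_mxKl !row_mxKr !cnot_permK ?hsubmxK // eq_sym.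
all: apply: PLabel_ext => i; rewrite ?gate_mapH_a ?gate_mapH_b ?gate_mapS_a ?gate_mapS_b ?eqxx //.
all: case: eqP => [-> |] //.
all: by rewrite ?gate_mapH_a ?gate_mapS_a ?eqxx -?addrA ?F2_addxx ?addr0.
Qed.

Lemma circ_map_revK C x : circ_map (rev C) (circ_map C x) = x.
Proof.
elim: C x => [// | g C IH] x.
by rewrite rev_cons circ_map_rcons [circ_map (g :: C) x]/= IH gate_mapK.
Qed.

Lemma circ_map_inj C : injective (circ_map C).
Proof. exact: can_inj (circ_map_revK C). Qed.

End Circuits.

(** * Weyl sets *)

Section WeylSets.
Variable n : nat.
Implicit Types (psi : State n) (x y : PLabel n) (C : circuit n).

Lemma WeylE psi x :
  Weyl psi x <-> exists s : bool, op_apply (Weyl_op x) psi = (fun w => (-1) ^+ s * psi w).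
Proof.
split=> [[fix_psi | flip_psi] | [[] eq_psi]].
- by exists false; apply: state_ext => w; rewrite fix_psi mul1r.
- by exists true; apply: state_ext => w; rewrite flip_psi mulN1r.
- by right=> w; rewrite eq_psi mulN1r.
- by left=> w; rewrite eq_psi mul1r.
Qed.

Lemma Weyl_circ C psi x : Weyl psi x <-> Weyl (op_apply (circ_op C) psi) (circ_map C x).
Proof.
have [s conjC] := circ_conj_Weyl C x; set U := circ_op C in conjC *.
have UK := circ_unitary C; rewrite -/U in UK.
have W_Cx : Weyl_op (circ_map C x) = op_scale ((-1) ^+ s) (op_conj U (Weyl_op x)).
  by rewrite conjC op_scaleA -signr_addb addbb op_scale1.
have W_x : Weyl_op x =
    op_mul (op_adj U) (op_mul (op_scale ((-1) ^+ s) (Weyl_op (circ_map C x))) U).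
  rewrite W_Cx op_scaleA -signr_addb addbb op_scale1 /op_conj -!op_mulA UK op_mul1l.
  by rewrite op_mulA UK op_mul1r.
rewrite !WeylE; split=> [[e eigen_x] | [e eigen_Cx]]; exists (s (+) e); rewrite signr_addb.
  rewrite W_Cx op_apply_scale /op_conj !op_apply_mul -(op_apply_mul (op_adj U)) UK op_apply1.
  by rewrite eigen_x op_applyZ; apply: state_ext => w; rewrite mulrA.
rewrite W_x !op_apply_mul op_apply_scale eigen_Cx !op_applyZ -op_apply_mul UK op_apply1.
by apply: state_ext => w; rewrite mulrA.
Qed.

Lemma Weyl_op_ket0 y w :
  op_apply (Weyl_op y) (@ket0 n) w = 'i ^+ dotN (lsubmx y) (rsubmx y) * (w == lsubmx y)%:R.
Proof.
by rewrite op_apply_ket0 Weyl_op_entry add0r dotN0r expr0 mul1r.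
Qed.

Lemma Weyl_ket0 (c : algC) y : c != 0 -> Weyl (fun z => c * ket0 z) y <-> lsubmx y = 0.
Proof.
move=> c_neq0; rewrite WeylE op_applyZ; split=> [[s eigen_y] | a_eq0].
  move/(congr1 (fun psi => psi (lsubmx y))): eigen_y; rewrite /= Weyl_op_ket0 eqxx /ket0.
  case: eqP => // _; rewrite mulr1 !mulr0 => /eqP.
  by rewrite mulf_eq0 (negbTE c_neq0) (negbTE (expCi_neq0 _)).
by exists false; apply: state_ext => w; rewrite Weyl_op_ket0 a_eq0 dotN0l !mul1r.
Qed.

Lemma Weyl_op_inj (s : bool) y y' : Weyl_op y = op_scale ((-1) ^+ s) (Weyl_op y') -> y = y'.
Proof.
move=> eqW; have s_neq0 : ((-1) ^+ s : algC) != 0 by rewrite signr_eq0.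
have eq_a : lsubmx y = lsubmx y'.
  move/(congr1 (fun A => A (lsubmx y) 0)): eqW; rewrite /op_scale !Weyl_op_entry !add0r eqxx.
  case: eqP => // _; rewrite !mulr0 mulr1 => /eqP.
  by rewrite mulf_eq0 signr_eq0 orbF (negbTE (expCi_neq0 _)).
have eq_entry z : 'i ^+ dotN (lsubmx y) (rsubmx y) * (-1) ^+ dotN (rsubmx y) z =
    (-1) ^+ s * ('i ^+ dotN (lsubmx y') (rsubmx y') * (-1) ^+ dotN (rsubmx y') z) :> algC.
  move/(congr1 (fun A => A (z + lsubmx y) z)): eqW.
  by rewrite /op_scale !Weyl_op_entry -eq_a eqxx !mulr1.
have eq_b : rsubmx y = rsubmx y'.
  have phase := eq_entry 0; rewrite !dotN0r !expr0 !mulr1 in phase.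
  apply/rowP => l; move: (eq_entry (delta_mx ord0 l)); rewrite phase -mulrA.
  move/(mulfI s_neq0)/(mulfI (expCi_neq0 _)).
  by rewrite signr_F2 !dotN_F2 !dotF_deltar.
by apply: PLabel_ext => i; rewrite ?eq_a ?eq_b.
Qed.

Lemma cliff_mapsE C x y : cliff_maps C x y <-> y = circ_map C x.
Proof.
have [s conjC] := circ_conj_Weyl C x.
split=> [[e [e_sign conj_e]] | ->]; last first.
  exists ((-1) ^+ s); split; first by case: (s); [right | left].
  by move=> w z; rewrite -/(op_conj _ _ w z) conjC.
have [b ?] : exists b : bool, e = (-1) ^+ b by case: e_sign => ->; [exists false | exists true].
subst e.
have conj_b : op_conj (circ_op C) (Weyl_op x) = op_scale ((-1) ^+ b) (Weyl_op y) by apply: op_ext.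
apply: (@Weyl_op_inj (b (+) s)).
by rewrite signr_addb -op_scaleA -conjC conj_b op_scaleA -signr_addb addbb op_scale1.
Qed.

End WeylSets.


(** * CNOT elimination of Z-type subspaces *)

Lemma gate_map_linear n (g : gate n) : linear (gate_map g).
Proof.
move=> c x y; apply: PLabel_ext => i; case: g => [j | j | j k neq_jk].
all: rewrite !(xaD, xbD, xaZ, xbZ).
all: rewrite ?gate_mapH_a ?gate_mapH_b ?gate_mapS_a ?gate_mapS_b ?(xaD, xbD, xaZ, xbZ).
all: try by [| case: eqP => _; ring].
all: by rewrite ?row_mxKl ?row_mxKr /cnot_perm !mxE; ring.
Qed.

Lemma circ_map_linear n (C : circuit n) : linear (circ_map C).
Proof.
elim: C => [| g C IH] c x y //=.
by rewrite /circ_map /= -!/(circ_map C _) gate_map_linear IH.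
Qed.

HB.instance Definition _ n (C : circuit n) :=
  GRing.isLinear.Build 'F_2 (PLabel n) (PLabel n) *:%R (circ_map C) (circ_map_linear C).

Lemma circ_mapE n (C : circuit n) x : linfun (circ_map C) x = circ_map C x.
Proof. exact: lfunE. Qed.

Lemma limg_circ_map_dim n (C : circuit n) (U : {vspace PLabel n}) :
  \dim (linfun (circ_map C) @: U) = \dim U.
Proof.
apply: limg_dim_eq; rewrite (_ : lker _ = 0%VS) ?capv0 //.
by apply/eqP/lker0P => x y; rewrite !circ_mapE; apply: circ_map_inj.
Qed.

Lemma linfun_circ_map_cat n (C C' : circuit n) :
  linfun (circ_map (C ++ C')) = (linfun (circ_map C') \o linfun (circ_map C))%VF.
Proof. by apply/lfunP => x; rewrite comp_lfunE !circ_mapE circ_map_cat. Qed.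

Definition cnot_within n (m : nat) (g : gate n) : bool :=
  if g is CNOT j k _ then (j < m)%N && (k < m)%N else false.

Lemma cnot_within_mono n m m' (g : gate n) : (m <= m')%N -> cnot_within m g -> cnot_within m' g.
Proof.
by move=> le_mm'; case: g => // j k neq_jk /andP[lt_jm lt_km]; rewrite /= !(leq_trans _ le_mm').
Qed.

Lemma circ_op_cnot_ket0 n m (C : circuit n) :
  all (cnot_within m) C -> op_apply (circ_op C) (@ket0 n) = @ket0 n.
Proof.
elim/last_ind: C => [|C g IH]; first by rewrite /circ_op /= op_apply1.
rewrite all_rcons => /andP[cnot_g cnot_C]; rewrite circ_op_rcons op_apply_mul IH //.
case: g cnot_g => // j k neq_jk _; apply: state_ext => w.
by rewrite op_apply_ket0 /= /cnot_op /ket0 mxE scale0r addr0.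
Qed.

Section ZLabels.
Variable n : nat.
Implicit Types (x y u : PLabel n) (E : circuit n).

Lemma cnot_mapZ (j k : 'I_n) (neq_jk : j != k) x : lsubmx x = 0 ->
  lsubmx (gate_map (CNOT neq_jk) x) = 0 /\
  forall i, xb (gate_map (CNOT neq_jk) x) i = xb x i + xb x k * (i == j)%:R.
Proof.
move=> x_Z; rewrite /= row_mxKl row_mxKr /cnot_perm x_Z mxE scale0r addr0.
by split=> // i; rewrite !mxE eqxx.
Qed.

Lemma circ_map_cnotZ m E x : all (cnot_within m) E -> lsubmx x = 0 -> lsubmx (circ_map E x) = 0.
Proof.
elim: E x => [|g E IH] x //= /andP[cnot_g cnot_E] x_Z; apply: IH => //.
by case: g cnot_g => // j k neq_jk _; case: (cnot_mapZ neq_jk x_Z).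
Qed.

Lemma circ_map_cnot_fix m E y : all (cnot_within m) E -> lsubmx y = 0 ->
  (forall k : 'I_n, (k < m)%N -> xb y k = 0) -> circ_map E y = y.
Proof.
move=> cnot_E y_Z y_low; elim: E cnot_E => [|g E IH] //= /andP[cnot_g /IH {2}<-].
congr circ_map; case: g cnot_g => // j k neq_jk /andP[lt_jm lt_km].
by rewrite /= /cnot_perm y_Z y_low // mxE !scale0r !addr0 -y_Z hsubmxK.
Qed.

Definition zlabel (i : nat) : PLabel n := row_mx 0 (\row_(k < n) ((k : nat) == i)%:R).

Lemma lsubmx_zlabel i : lsubmx (zlabel i) = 0.
Proof. by rewrite row_mxKl. Qed.

Lemma xb_zlabel i (k : 'I_n) : xb (zlabel i) k = (k == i :> nat)%:R.
Proof. by rewrite row_mxKr mxE. Qed.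

(* The paper's [0^{n+(n-d)} x F_2^d]. *)
Fixpoint ztail (d : nat) : {vspace PLabel n} :=
  if d is d'.+1 then (ztail d' + <[zlabel (n - d'.+1)]>)%VS else 0%VS.

Lemma ztailP d y : y \in ztail d <-> lsubmx y = 0 /\ forall j : 'I_n, (j < n - d)%N -> xb y j = 0.
Proof.
elim: d y => [|d IH] y /=.
  rewrite memv0 subn0; split=> [/eqP -> | [y_Z y_b]].
    by split=> [|j _]; rewrite ?linear0 ?mxE.
  by apply/eqP; apply: PLabel_ext => i; rewrite ?y_Z ?y_b // !mxE.
split=> [/memv_addP[q /IH[q_Z q_low] [z /vlineP[c ->] ->]] | [y_Z y_low]].
  split=> [|j lt_j]; first by rewrite linearD linearZ /= q_Z lsubmx_zlabel scaler0 addr0.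
  rewrite xbD xbZ xb_zlabel (ltn_eqF lt_j) mulr0 addr0 q_low //.
  exact: leq_trans lt_j (leq_sub2l _ (leqnSn _)).
case: (ltnP d n) => [lt_dn | le_nd]; last first.
  by apply: (subvP (addvSl _ _)); apply/IH; split=> // j; rewrite (eqP le_nd).
have lt_pn : (n - d.+1 < n)%N by rewrite ltn_subrL (leq_ltn_trans (leq0n d) lt_dn).
pose p := Ordinal lt_pn; rewrite -[y](F2_addKv (xb y p *: zlabel p)).
apply: memv_add; last by rewrite memvZ ?memv_line.
apply/IH; split=> [|j lt_j]; first by rewrite linearD linearZ /= y_Z lsubmx_zlabel scaler0 addr0.
rewrite xbD xbZ xb_zlabel; case: (eqVneq (j : nat) (n - d.+1)%N) => [eq_jp | neq_jp].
  by rewrite mulr1 (_ : j = p) ?F2_addxx //; apply: val_inj.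
by rewrite mulr0 add0r y_low // ltn_neqAle neq_jp -ltnS subnSK.
Qed.

Lemma ztail_cnot_fix d E y : all (cnot_within (n - d)) E -> y \in ztail d -> circ_map E y = y.
Proof. by move=> cnot_E /ztailP[y_Z y_low]; apply: circ_map_cnot_fix cnot_E y_Z y_low. Qed.

Lemma cnot_clear_below u (p : 'I_n) m : lsubmx u = 0 -> xb u p = 1 -> (m <= p)%N ->
  exists2 E, all (cnot_within p.+1) E &
    [/\ lsubmx (circ_map E u) = 0,
        forall i : 'I_n, (i < m)%N -> xb (circ_map E u) i = 0 &
        forall i : 'I_n, (m <= i)%N -> xb (circ_map E u) i = xb u i].
Proof.
move=> u_Z u_p; elim: m => [|m IH] lt_mp; first by exists [::].
have [E cnot_E [v_Z v_low v_high]] := IH (ltnW lt_mp).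
set v := circ_map E u in v_Z v_low v_high *.
have v_p : xb v p = 1 by rewrite v_high // ltnW.
pose mi : 'I_n := Ordinal (ltn_trans lt_mp (ltn_ord p)).
have lt_i_m i : (i < m.+1)%N -> i != mi -> (i < m)%N.
  by move=> lt_im neq_im; rewrite ltn_neqAle -ltnS lt_im andbT.
have [v_m | v_m] := F2P (xb v mi).
  exists E => //; split=> // i lt_im; last by apply: v_high; apply: ltnW.
  by case: (eqVneq i mi) => [-> // | /(lt_i_m _ lt_im)/v_low].
have neq_mp : mi != p by rewrite -(inj_eq val_inj) /= neq_ltn lt_mp.
exists (rcons E (CNOT neq_mp)).
  by rewrite all_rcons cnot_E /= ltnS (ltnW lt_mp) leqnn.
have [w_Z w_b] := cnot_mapZ neq_mp v_Z; rewrite circ_map_rcons -/v.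
split=> // i lt_i; rewrite w_b v_p mul1r.
  case: (eqVneq i mi) => [-> | neq_im]; first by rewrite v_m F2_addxx.
  by rewrite addr0 v_low // lt_i_m.
have neq_im : i != mi by rewrite -(inj_eq val_inj) /= neq_ltn lt_i orbT.
by rewrite (negbTE neq_im) addr0 v_high // ltnW.
Qed.

Lemma cnot_pivot u (j p : 'I_n) : lsubmx u = 0 -> xb u j = 1 -> (j <= p)%N ->
  exists2 E, all (cnot_within p.+1) E & circ_map E u + zlabel p \in ztail (n - p.+1).
Proof.
move=> u_Z u_j le_jp.
have [E1 cnot_E1 [v_Z v_p]] : exists2 E1, all (cnot_within p.+1) E1 &
    lsubmx (circ_map E1 u) = 0 /\ xb (circ_map E1 u) p = 1.
  have [u_p | u_p] := F2P (xb u p); last by exists [::].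
  have neq_pj : p != j by apply: contra_eq_neq u_p => ->; rewrite u_j.
  exists [:: CNOT neq_pj]; first by rewrite /= !ltnS le_jp leqnn.
  have [w_Z w_b] := cnot_mapZ neq_pj u_Z.
  by split=> //; rewrite w_b u_p u_j eqxx mul1r add0r.
have [E2 cnot_E2 [w_Z w_low w_high]] := cnot_clear_below v_Z v_p (leqnn p).
exists (E1 ++ E2); first by rewrite all_cat cnot_E1.
rewrite circ_map_cat; apply/ztailP; rewrite subKn ?ltn_ord //.
split=> [|i lt_ip]; first by rewrite linearD /= w_Z lsubmx_zlabel addr0.
rewrite xbD xb_zlabel; move: lt_ip; rewrite ltnS leq_eqVlt => /orP[/eqP/val_inj -> | lt_ip].
  by rewrite eqxx w_high // v_p F2_addxx.
by rewrite w_low // (ltn_eqF lt_ip) addr0.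
Qed.
Lemma cnot_gauss_seq (X : seq (PLabel n)) : free X -> all (fun x => lsubmx x == 0) X ->
  exists2 D, all (cnot_within n) D & (linfun (circ_map D) @: <<X>>)%VS = ztail (size X).
Proof.
elim: X => [|w X IH]; first by exists [::]; rewrite ?span_nil ?limg0.
rewrite free_cons /= => /andP[w_new free_X] /andP[/eqP w_Z X_Z].
have [D cnot_D imD] := IH free_X X_Z; set d := size X in imD *.
set u := circ_map D w.
have u_Z : lsubmx u = 0 by apply: circ_map_cnotZ cnot_D w_Z.
have u_new : u \notin ztail d.
  apply: contra w_new; rewrite -imD => /memv_imgP[w' w'_X].
  by rewrite circ_mapE => /circ_map_inj ->.
have [j lt_jd u_j] : exists2 j : 'I_n, (j < n - d)%N & xb u j = 1.
  case: (boolP [exists (j : 'I_n | (j < n - d)%N), xb u j == 1]).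
    by case/exists_inP=> j lt_j /eqP u_j; exists j.
  move/exists_inPn=> u_low; case/negP: u_new; apply/ztailP; split=> // j lt_j.
  by case: (F2P (xb u j)) (u_low j lt_j) => ->.
have lt_dn : (d < n)%N by rewrite -subn_gt0 (leq_ltn_trans (leq0n j) lt_jd).
have lt_pn : (n - d.+1 < n)%N by rewrite ltn_subrL (leq_ltn_trans (leq0n d) lt_dn).
pose p := Ordinal lt_pn; have n_d : (n - d)%N = p.+1 by rewrite subnSK.
have le_jp : (j <= p)%N by rewrite -ltnS -n_d.
have [E cnot_E pivot] := cnot_pivot u_Z u_j le_jp.
exists (D ++ E).
  by rewrite all_cat cnot_D; apply: sub_all cnot_E => g; apply: cnot_within_mono.
have E_fix : (linfun (circ_map E) @: ztail d)%VS = ztail d.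
  rewrite (eq_in_limg (g := \1%VF)) ?lim1g // => y y_d.
  by rewrite circ_mapE id_lfunE (ztail_cnot_fix _ y_d) // n_d.
rewrite linfun_circ_map_cat limg_comp span_cons !limgD !limg_line imD E_fix !circ_mapE -/u addvC.
by apply: addv_line_F2; rewrite -[d in ztail d](subKn (ltnW lt_dn)) n_d.
Qed.

End ZLabels.

Lemma cnot_gauss n (W : {vspace PLabel n}) : (forall x, x \in W -> lsubmx x = 0) ->
  exists2 D, all (cnot_within n) D & (linfun (circ_map D) @: W)%VS = ztail n (\dim W).
Proof.
move=> W_Z; have basisW := vbasisP W.
have [|D cnot_D imD] := cnot_gauss_seq (basis_free basisW).
  by apply/allP => x /(basis_mem basisW)/W_Z/eqP.
by exists D; rewrite // -{1}(span_basis basisW) imD size_tuple.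
Qed.

Lemma cliff_image_vspace n (C : circuit n) (T : {vspace PLabel n}) y :
  cliff_image C (fun x => x \in T) y <-> y \in (linfun (circ_map C) @: T)%VS.
Proof.
split=> [[x [x_T /cliff_mapsE ->]] | /memv_imgP[x x_T ->]].
  by rewrite -circ_mapE memv_img.
by exists x; split=> //; apply/cliff_mapsE; rewrite circ_mapE.
Qed.

Unset Implicit Arguments.
Theorem lemma5p1 (n t : nat) (psi : State n) (T : {vspace PLabel n}) :
  stabilizer_state psi ->
  (forall x, x \in T -> Weyl psi x) ->
  (t <= n)%N ->
  \dim T = (n - t)%N ->
  exists C : circuit n,
    (exists c : algC, `|c| = 1 /\
       forall z, op_apply (circ_op C) psi z = c * ket0 z) /\
    (forall y, cliff_image C (Weyl psi) y <-> lsubmx y = 0) /\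
    (forall y, cliff_image C (fun x => x \in T) y <->
       (lsubmx y = 0 /\ forall j : 'I_n, (j < t)%N -> rsubmx y ord0 j = 0)).
Proof.
case=> U [c [norm_c psi_U]] T_Weyl le_tn dimT.
have c_neq0 : c != 0 by rewrite -normr_eq0 norm_c oner_eq0.
have Vpsi : op_apply (circ_op (circ_inv U)) psi = (fun z => c * ket0 z).
  by rewrite (state_ext psi_U) op_applyZ -op_apply_mul circ_op_inv circ_unitary op_apply1.
have [|D cnot_D imD] := @cnot_gauss n (linfun (circ_map (circ_inv U)) @: T)%VS.
  move=> _ /memv_imgP[x x_T ->]; rewrite circ_mapE.
  by apply/(Weyl_ket0 _ c_neq0); rewrite -Vpsi -Weyl_circ; apply: T_Weyl.
set C := circ_inv U ++ D; exists C.
have Cpsi : op_apply (circ_op C) psi = (fun z => c * ket0 z).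
  by rewrite circ_op_cat op_apply_mul Vpsi op_applyZ (circ_op_cnot_ket0 cnot_D).
have Weyl_C x : Weyl psi x <-> lsubmx (circ_map C x) = 0.
  by rewrite (Weyl_circ C) Cpsi; apply: Weyl_ket0.
split; first by exists c; split=> // z; rewrite Cpsi.
split=> y.
  split=> [[x [/Weyl_C x_S /cliff_mapsE ->]] | y_Z] //.
  have [G circK Gcirc] := injF_bij (@circ_map_inj n C).
  by exists (G y); split; [apply/Weyl_C; rewrite Gcirc | apply/cliff_mapsE; rewrite Gcirc].
have imT : (linfun (circ_map C) @: T)%VS = ztail n (n - t).
  by rewrite linfun_circ_map_cat limg_comp imD limg_circ_map_dim dimT.
by rewrite cliff_image_vspace imT ztailP subKn.
Qed.
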